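(* Let $q=p^{m_0}$ with $p$ prime, let $A=\mathbb{F}_q[\theta]$, and let $m$ be a positive integer. Then $$\Pi\left(\frac{q^{m+1}-1}{q-1}\right)=\det V(0,[1],\ldots,[m]),$$ where $V(0,[1],\ldots,[m])$ is the $(m+1)\times(m+1)$ matrix whose row indexed by $i\in\{0,1,\ldots,m\}$ is $(1,[i],[i]^2,\ldots,[i]^m)$, with the convention $[0]:=0$ and $0^0=1$ (so the first row is $(1,0,\ldots,0)$).
   Context: For a positive integer $i$, $[i]:=\theta^{q^i}-\theta\in A$. Set $D_0:=1$ and, for $i>0$, $D_i:=[i][i-1]^q\cdots[1]^{q^{i-1}}$ (equivalently $D_i=[i]D_{i-1}^q$). For a nonnegative integer $j$ with $q$-adic expansion $j=\sum_{t=0}^{n}c_tq^t$, $0\le c_t<q$, the Carlitz factorial is $\Pi(j):=\prod_{t=0}^{n}D_t^{c_t}$. In particular $\Pi\left(\frac{q^{m+1}-1}{q-1}\right)=D_0D_1\cdots D_m$. *)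

From HB Require Import structures.
From mathcomp Require Import all_boot all_order all_algebra all_field.
Set Implicit Arguments. Unset Strict Implicit. Unset Printing Implicit Defensive.
Import GRing.Theory.
Local Open Scope ring_scope.

(* A = F_q[theta] is modelled as {poly F} for a finite field F, theta = 'X,
   and q := #|F|. *)
Section Carlitz.
Variable F : finFieldType.

Definition qF : nat := #|F|.

Definition bracket (i : nat) : {poly F} := 'X ^+ (qF ^ i) - 'X.

Fixpoint Dcar (i : nat) : {poly F} :=
  match i with
  | 0 => 1
  | i'.+1 => bracket i'.+1 * (Dcar i') ^+ qF
  end.

Definition qdigit (j t : nat) : nat := (j %/ qF ^ t) %% qF.

(* Carlitz factorial: Pi(j) = prod_t D_t^(c_t); digits of index t > j vanish
   since q^t > j, so the product over t < j.+1 covers the whole expansion. *)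
Definition carlitz_fact (j : nat) : {poly F} :=
  \prod_(t < j.+1) Dcar t ^+ qdigit j t.

Definition bracket0 (i : nat) : {poly F} := if i == 0%N then 0 else bracket i.

Definition Vbr (m : nat) : 'M[{poly F}]_(m.+1) :=
  \matrix_(i < m.+1, j < m.+1) bracket0 i ^+ j.
End Carlitz.

From HB Require Import structures.
From mathcomp Require Import all_boot all_order all_algebra all_field.
From mathcomp Require Import zify.
Local Open Scope ring_scope.
Import GRing.Theory.

(* In characteristic p with q a power of p, raising to the q-th power is
   additive, so D_j = prod_(i < j) (theta^(q^j) - theta^(q^i)); this is exactly
   the Vandermonde product prod_(i < j) ([j] - [i]) with [0] = 0.  On the other
   side (q^(m+1) - 1)/(q - 1) = 1 + q + ... + q^m has all q-adic digits 1 in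
   positions 0..m, so its Carlitz factorial is D_0 D_1 ... D_m. *)

Section Repunit.
Variable b : nat.
Hypothesis b_gt1 : (1 < b)%N.

Let b_exp_gt0 k : (0 < b ^ k)%N.
Proof. by rewrite expn_gt0 ltnW. Qed.

Definition repunit (n : nat) : nat := (\sum_(t < n) b ^ t)%N.

Lemma repunitS n : repunit n.+1 = (repunit n + b ^ n)%N.
Proof. by rewrite /repunit big_ord_recr. Qed.

Lemma repunitSl n : repunit n.+1 = (1 + b * repunit n)%N.
Proof.
rewrite /repunit big_ord_recl expn0 big_distrr /=; congr (_ + _)%N.
by apply: eq_bigr => i _; rewrite expnS.
Qed.

Lemma repunitD n k : repunit (n + k) = (repunit n + b ^ n * repunit k)%N.
Proof.
elim: k => [|k IHk]; first by rewrite addn0 /repunit big_ord0 muln0 addn0.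
by rewrite addnS !repunitS IHk expnD mulnDr addnA.
Qed.

Lemma repunit_lt n : (repunit n < b ^ n)%N.
Proof.
elim: n => [|n IHn]; first by rewrite /repunit big_ord0.
rewrite repunitS expnS (leq_trans (_ : _ < b ^ n + b ^ n)%N) ?ltn_add2r //.
by rewrite addnn -mul2n leq_mul2r b_gt1 orbT.
Qed.

Lemma leq_repunit n : (n <= repunit n)%N.
Proof.
elim: n => [|n IHn] //; rewrite repunitS.
by have := b_exp_gt0 n; lia.
Qed.

Lemma repunit_geom n : ((b ^ n - 1) %/ (b - 1))%N = repunit n.
Proof.
suff geom : ((b - 1) * repunit n)%N = (b ^ n - 1)%N.
  by rewrite -geom mulKn //; lia.
elim: n => [|n IHn]; first by rewrite /repunit big_ord0 muln0.
rewrite repunitS mulnDr IHn expnS.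
by have := b_exp_gt0 n; nia.
Qed.

Lemma repunit_digit n t : ((repunit n %/ b ^ t) %% b)%N = (t < n)%N.
Proof.
case: (ltnP t n) => [lt_tn | le_nt].
  have [k ->] : exists k, n = (t + k.+1)%N by exists (n - t).-1; lia.
  rewrite repunitD addnC mulnC divnMDl //.
  rewrite divn_small ?repunit_lt // addn0 repunitSl.
  by rewrite addnC mulnC modnMDl modn_small.
rewrite divn_small ?mod0n //.
by apply: leq_trans (repunit_lt n) _; rewrite leq_exp2l.
Qed.

End Repunit.

Lemma exprBn_pnat (R : comNzRingType) (x y : R) n :
  [pchar R].-nat n -> (x - y) ^+ n = x ^+ n - y ^+ n.
Proof. by move=> pcharRn; rewrite exprDn_pchar // exprNn_pchar. Qed.

Section Carlitz.
Variable F : finFieldType.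
Local Notation q := (qF F).

Lemma qF_gt1 : (1 < q)%N.
Proof. exact: finNzRing_gt1. Qed.

Lemma pchar_poly_nat_qF : [pchar {poly F}].-nat q.
Proof.
have [p p_pr pcharFp] := finPcharP F.
rewrite (eq_pnat _ (@pchar_poly _)) (eq_pnat _ (pcharf_eq pcharFp)).
by rewrite /qF (card_pprimeChar pcharFp) pnatX pnat_id.
Qed.

Lemma Dcar_prod j : Dcar F j = \prod_(i < j) ('X ^+ (q ^ j) - 'X ^+ (q ^ i)).
Proof.
elim: j => [|j IHj]; first by rewrite big_ord0.
rewrite big_ord_recl /= IHj -prodrXl expn0 expr1 /bracket.
congr (_ * _); apply: eq_bigr => i _.
by rewrite exprBn_pnat ?pchar_poly_nat_qF // -!exprM -!expnSr.
Qed.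

Lemma carlitz_fact_repunit n :
  carlitz_fact F (repunit q n) = \prod_(t < n) Dcar F t.
Proof.
have le_n_j : (n <= (repunit q n).+1)%N := leqW (leq_repunit _ qF_gt1 n).
rewrite /carlitz_fact [RHS](big_ord_widen _ _ le_n_j) [RHS]big_mkcond /=.
by apply: eq_bigr => t _; rewrite /qdigit repunit_digit ?qF_gt1 //; case: ifP.
Qed.

Lemma bracket0E i : bracket0 F i = 'X ^+ (q ^ i) - 'X.
Proof. by case: i => [|i] //; rewrite /bracket0 /= expn0 expr1 subrr. Qed.

Lemma det_Vbr m :
  \det (Vbr F m) =
  \prod_(j < m.+1) \prod_(i < j) ('X ^+ (q ^ j) - 'X ^+ (q ^ i)).
Proof.
have -> : Vbr F m = (Vandermonde m.+1 (\row_j bracket0 F j))^T.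
  by apply/matrixP => i j; rewrite !mxE.
rewrite det_tr det_Vandermonde (exchange_big_dep xpredT) //=.
apply: eq_bigr => j _.
rewrite (big_ord_widen m.+1 (fun i => 'X ^+ (q ^ j) - 'X ^+ (q ^ i))
  (ltnW (ltn_ord j))).
by apply: eq_bigr => i _; rewrite !mxE !bracket0E opprB addrA subrK.
Qed.

End Carlitz.

(* The identity also holds for m = 0. *)
Theorem corollary2p7 (F : finFieldType) (m : nat) (hm : (0 < m)%N) :
  carlitz_fact F ((qF F ^ m.+1 - 1) %/ (qF F - 1)) = \det (Vbr F m).
Proof.
rewrite repunit_geom ?qF_gt1 // carlitz_fact_repunit det_Vbr.
by apply: eq_bigr => j _; rewrite Dcar_prod.
Qed.
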